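(* There is an absolute constant $C$ such that the following holds. Let $d\ge 1$, $\sigma\in(0,1]$, $\theta\in(0,\pi/2)$, and let $L$ be a finite set of closed line segments in $\mathbb{R}^d$ such that (i) $L$ is $\sigma$-exposed, (ii) $\bigcap_{s\in L} s\neq\emptyset$, (iii) for every pair $s,s'\in L$ the angle between $s$ and $s'$ is at most $\theta$, and (iv) $\sin\theta\le \sigma/4$. Then $|L|\le C/\sigma^2$.
   Context: For sets $X, Y\subseteq\mathbb{R}^d$ and $\sigma>0$, $X$ $\sigma$-shadows $Y$ if $\max_{q\in Y} \mathrm{dist}(q, X) \le \sigma\cdot \mathrm{diam}(Y)$, where $\mathrm{dist}(q,X)=\min_{p\in X}\|q-p\|$. A set of objects is $\sigma$-exposed if no object in the set $\sigma$-shadows another (distinct) object of the set. The angle between two segments is the angle in $[0,\pi/2]$ between the lines supporting them. *)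

From Stdlib Require Export Reals List.
Open Scope R_scope.

(* A point of R^d is represented as a function nat -> R whose coordinates
   of index >= d vanish. *)
Definition point := nat -> R.

Definition in_Rd (d : nat) (x : point) : Prop := forall i, (d <= i)%nat -> x i = 0.

Definition vsub (x y : point) : point := fun i => x i - y i.

Definition dot (d : nat) (x y : point) : R := sum_f 0 (pred d) (fun i => x i * y i).

(* Euclidean norm in R^d (d >= 1 assumed where used) *)
Definition norm (d : nat) (x : point) : R := sqrt (dot d x x).

Record segment := Seg { ep1 : point; ep2 : point }.

Definition seg_set (s : segment) (q : point) : Prop :=
  exists t, 0 <= t <= 1 /\ forall i, q i = ep1 s i + t * (ep2 s i - ep1 s i).

Definition seg_diam (d : nat) (s : segment) : R := norm d (vsub (ep1 s) (ep2 s)).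

(* X sigma-shadows Y : max_{q in Y} dist(q, X) <= sigma * diam(Y);
   both segments are compact so max/min are attained. *)
Definition shadows (d : nat) (sigma : R) (X Y : segment) : Prop :=
  forall q, seg_set Y q -> exists p, seg_set X p /\ norm d (vsub q p) <= sigma * seg_diam d Y.

Definition same_seg (s s' : segment) : Prop := forall q, seg_set s q <-> seg_set s' q.

Definition exposed (d : nat) (sigma : R) (L : list segment) : Prop :=
  forall s s', In s L -> In s' L -> ~ same_seg s s' -> ~ shadows d sigma s s'.

(* Angle in [0, pi/2] between the lines supporting two (nondegenerate) segments. *)
Definition seg_angle (d : nat) (s s' : segment) : R :=
  let u := vsub (ep2 s) (ep1 s) in
  let v := vsub (ep2 s') (ep1 s') in
  acos (Rabs (dot d u v) / (norm d u * norm d v)).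

(* L is a finite set of closed line segments in R^d: endpoints in R^d,
   nondegenerate segments, listed without repetition (as sets). *)
Definition seg_family (d : nat) (L : list segment) : Prop :=
  (forall s, In s L -> in_Rd d (ep1 s) /\ in_Rd d (ep2 s) /\ ep1 s <> ep2 s) /\
  (forall i j, (i < length L)%nat -> (j < length L)%nat -> i <> j ->
     ~ same_seg (nth i L (Seg (fun _ => 0) (fun _ => 0))) (nth j L (Seg (fun _ => 0) (fun _ => 0)))).

(* All segments pass through the common point p and, since sin theta <= 1/4, are pairwise
   within an angle whose cosine exceeds 1/2; hence they can be oriented so that their
   directions pairwise make acute angles. On each oriented segment, p sits at a relative
   position in [0,1]. If two segments have positions within sigma/2 of each other, the
   longer one sigma-shadows the shorter: a point of the shorter is matched with the point of
   the longer at the corresponding (clamped) position, the angle contributing at most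
   sigma/4 and the position mismatch at most sigma/2 times the shorter length. Exposedness
   thus forces the positions to lie in distinct intervals of length sigma/2, so
   |L| <= 2/sigma + 1 <= 3/sigma^2. *)

From Stdlib Require Import Reals Lra Lia Psatz List FunctionalExtensionality ZArith Classical.
Open Scope R_scope.

Lemma sum_f_R0_linear n (f g h : nat -> R) a b :
  (forall i, f i = a * g i + b * h i) ->
  sum_f_R0 f n = a * sum_f_R0 g n + b * sum_f_R0 h n.
Proof.
  intros H; induction n as [|n IH]; simpl; rewrite ?IH, H; ring.
Qed.

Lemma sum_f_R0_sq_nonneg n (x : nat -> R) : 0 <= sum_f_R0 (fun i => x i * x i) n.
Proof.
  induction n as [|n IH]; simpl; nra.
Qed.

Lemma sum_f_R0_sq_pos n (x : nat -> R) i :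
  (i <= n)%nat -> x i <> 0 -> 0 < sum_f_R0 (fun j => x j * x j) n.
Proof.
  intros Hi Hx; pose proof (Rsqr_pos_lt _ Hx) as Hsq; unfold Rsqr in Hsq.
  induction n as [|n IH]; simpl.
  - replace i with 0%nat in Hsq by lia; exact Hsq.
  - pose proof (sum_f_R0_sq_nonneg n x).
    destruct (Nat.eq_dec i (S n)) as [<-|Hne].
    + nra.
    + assert (0 < sum_f_R0 (fun j => x j * x j) n) by (apply IH; lia). nra.
Qed.

Lemma dot_comm d x y : dot d x y = dot d y x.
Proof.
  unfold dot; f_equal; apply functional_extensionality; intros; ring.
Qed.

Lemma dot_linear_l d (x y z : point) a b :
  dot d (fun i => a * x i + b * y i) z = a * dot d x z + b * dot d y z.
Proof.
  unfold dot, sum_f; apply sum_f_R0_linear; intros; ring.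
Qed.

Lemma dot_linear_r d (x y z : point) a b :
  dot d z (fun i => a * x i + b * y i) = a * dot d z x + b * dot d z y.
Proof.
  rewrite dot_comm, dot_linear_l, (dot_comm d x), (dot_comm d y); reflexivity.
Qed.

Lemma dot_ext d x x' y y' :
  (forall i, x i = x' i) -> (forall i, y i = y' i) -> dot d x y = dot d x' y'.
Proof.
  intros Hx Hy.
  apply functional_extensionality in Hx; apply functional_extensionality in Hy.
  now subst.
Qed.

Lemma dot_self_combination d x y a b :
  dot d (fun i => a * x i + b * y i) (fun i => a * x i + b * y i)
  = a ^ 2 * dot d x x + 2 * a * b * dot d x y + b ^ 2 * dot d y y.
Proof.
  rewrite dot_linear_l, !dot_linear_r, (dot_comm d y x); ring.
Qed.

Lemma dot_self_nonneg d x : 0 <= dot d x x.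
Proof.
  unfold dot, sum_f; apply (sum_f_R0_sq_nonneg _ (fun i => x (i + 0)%nat)).
Qed.

Lemma dot_self_pos d x i :
  in_Rd d x -> x i <> 0 -> 0 < dot d x x.
Proof.
  intros Hx Hi.
  assert (Hid : (i < d)%nat).
  { destruct (Nat.lt_ge_cases i d) as [|Hge]; [assumption|].
    now exfalso; apply Hi, Hx. }
  unfold dot, sum_f; apply (sum_f_R0_sq_pos _ (fun j => x (j + 0)%nat) i); [lia|].
  now rewrite Nat.add_0_r.
Qed.

Lemma norm_nonneg d x : 0 <= norm d x.
Proof. apply sqrt_pos. Qed.

Lemma norm_mul_norm d x : norm d x * norm d x = dot d x x.
Proof. apply sqrt_sqrt, dot_self_nonneg. Qed.

Lemma Cauchy_Schwarz d x y :
  0 < dot d y y -> (dot d x y) ^ 2 <= dot d x x * dot d y y.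
Proof.
  intros Hy.
  pose proof (dot_self_nonneg d (fun i => dot d y y * x i + (- dot d x y) * y i)) as H.
  rewrite dot_self_combination in H.
  nra.
Qed.

Lemma le_abs_dot_of_sq d k x y :
  0 <= k -> k ^ 2 * (dot d x x * dot d y y) <= (dot d x y) ^ 2 ->
  k * (norm d x * norm d y) <= Rabs (dot d x y).
Proof.
  intros Hk H.
  apply Rsqr_incr_0_var; [|apply Rabs_pos].
  unfold Rsqr; rewrite <- (pow2_abs (dot d x y)) in H.
  rewrite <- (norm_mul_norm d x), <- (norm_mul_norm d y) in H.
  nra.
Qed.
Definition dir (s : segment) : point := vsub (ep2 s) (ep1 s).

Definition seg_rev (s : segment) : segment := Seg (ep2 s) (ep1 s).

Lemma dir_dot_pos d s :
  in_Rd d (ep1 s) -> in_Rd d (ep2 s) -> ep1 s <> ep2 s -> 0 < dot d (dir s) (dir s).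
Proof.
  intros H1 H2 Hne.
  assert (Hi : exists i, dir s i <> 0).
  { apply NNPP; intros Hall; apply Hne, functional_extensionality; intros i.
    apply NNPP; intros Hi; apply Hall; exists i; unfold dir, vsub; lra. }
  destruct Hi as [i Hi]; apply (dot_self_pos d _ i); [|exact Hi].
  intros j Hj; unfold dir, vsub; rewrite H1, H2 by exact Hj; ring.
Qed.

Lemma seg_set_rev s q : seg_set (seg_rev s) q <-> seg_set s q.
Proof.
  unfold seg_set, seg_rev; simpl; split; intros [t [Ht Hq]];
    exists (1 - t); split; try lra; intros i; rewrite Hq; ring.
Qed.

Lemma dot_dir_rev_l d s z : dot d (dir (seg_rev s)) z = - dot d (dir s) z.
Proof.
  rewrite (dot_ext d _ (fun i => (-1) * dir s i + 0 * dir s i) z z), dot_linear_l.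
  - ring.
  - intros i; unfold dir, seg_rev, vsub; simpl; ring.
  - reflexivity.
Qed.

Lemma dot_dir_rev_r d s z : dot d z (dir (seg_rev s)) = - dot d z (dir s).
Proof. rewrite dot_comm, dot_dir_rev_l, dot_comm; reflexivity. Qed.

Lemma seg_diam_sqrt d s : seg_diam d s = sqrt (dot d (dir s) (dir s)).
Proof.
  unfold seg_diam, norm; f_equal.
  rewrite (dot_ext d _ (fun i => (-1) * dir s i + 0 * dir s i) _
                       (fun i => (-1) * dir s i + 0 * dir s i)).
  - rewrite dot_self_combination; ring.
  - intros i; unfold dir, vsub; ring.
  - intros i; unfold dir, vsub; ring.
Qed.

Lemma seg_diam_rev d s : seg_diam d (seg_rev s) = seg_diam d s.
Proof.
  rewrite !seg_diam_sqrt, dot_dir_rev_l, dot_dir_rev_r; f_equal; ring.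
Qed.

Lemma shadows_same_seg d sigma a b a' b' :
  same_seg a a' -> same_seg b b' -> seg_diam d b = seg_diam d b' ->
  shadows d sigma a b -> shadows d sigma a' b'.
Proof.
  intros Ha Hb Hdiam H q Hq.
  destruct (H q (proj2 (Hb q) Hq)) as [r [Hr Hqr]].
  exists r; split; [apply Ha, Hr | rewrite <- Hdiam; exact Hqr].
Qed.

Definition orient_along d (z : point) s :=
  if Rle_dec 0 (dot d (dir s) z) then s else seg_rev s.

Lemma orient_along_dir d s : orient_along d (dir s) s = s.
Proof.
  unfold orient_along; destruct Rle_dec as [|Hneg]; [reflexivity|].
  exfalso; apply Hneg, dot_self_nonneg.
Qed.

Lemma same_seg_orient_along d z s : same_seg (orient_along d z s) s.
Proof.
  intros q; unfold orient_along; destruct Rle_dec; [tauto | apply seg_set_rev].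
Qed.

Lemma seg_diam_orient_along d z s : seg_diam d (orient_along d z s) = seg_diam d s.
Proof. unfold orient_along; destruct Rle_dec; [reflexivity | apply seg_diam_rev]. Qed.

Lemma dot_orient_along_nonneg d z s : 0 <= dot d (dir (orient_along d z s)) z.
Proof.
  unfold orient_along; destruct Rle_dec; rewrite ?dot_dir_rev_l; lra.
Qed.

Lemma dot_self_orient_along d z s :
  dot d (dir (orient_along d z s)) (dir (orient_along d z s)) = dot d (dir s) (dir s).
Proof.
  unfold orient_along; destruct Rle_dec; rewrite ?dot_dir_rev_l, ?dot_dir_rev_r; ring.
Qed.

Lemma dot_orient_along_sq d z s y :
  (dot d (dir (orient_along d z s)) y) ^ 2 = (dot d (dir s) y) ^ 2.
Proof.
  unfold orient_along; destruct Rle_dec; rewrite ?dot_dir_rev_l; ring.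
Qed.

Definition seg_param d (p : point) s :=
  dot d (vsub p (ep1 s)) (dir s) / dot d (dir s) (dir s).

Lemma seg_param_spec d p s :
  0 < dot d (dir s) (dir s) -> seg_set s p ->
  0 <= seg_param d p s <= 1 /\ forall i, p i = ep1 s i + seg_param d p s * dir s i.
Proof.
  intros Hs [t [Ht Hp]].
  replace (seg_param d p s) with t; [split; [exact Ht | exact Hp]|].
  unfold seg_param.
  rewrite (dot_ext d _ (fun i => t * dir s i + 0 * dir s i) (dir s) (dir s)).
  - rewrite dot_linear_l; field; lra.
  - intros i; unfold dir, vsub; rewrite Hp; ring.
  - reflexivity.
Qed.

Lemma exists_param_close sigma Da Db c xa xb t :
  0 <= Db <= Da -> 0 < Da -> 0 <= c <= Da * Db ->
  0 <= xa <= 1 -> 0 <= xb <= 1 -> 0 <= t <= 1 -> - (sigma / 2) <= xa - xb <= sigma / 2 ->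
  exists u, 0 <= u <= 1 /\
    - (sigma * Da * Db / 2) <= (u - xa) * Da ^ 2 - (t - xb) * c <= sigma * Da * Db / 2.
Proof.
  intros HD HDa Hc Hxa Hxb Ht Hx.
  assert (HDab : 0 <= Da * Db) by nra.
  assert (HDa2 : Da * Db <= Da ^ 2) by nra.
  set (u0 := xa + (t - xb) * c / Da ^ 2).
  assert (Hu0 : (u0 - xa) * Da ^ 2 = (t - xb) * c) by (unfold u0; field; lra).
  destruct (Rle_dec u0 1) as [Hu1|Hu1]; [destruct (Rle_dec 0 u0) as [Hu2|Hu2]|].
  - exists u0; split; [lra|].
    rewrite Hu0; nra.
  - apply Rnot_le_lt in Hu2.
    exists 0; split; [lra|].
    assert (xa * (Da * Db) <= xa * Da ^ 2) by nra.
    assert (- ((t - xb) * c) <= xb * c) by nra.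
    split; nra.
  - apply Rnot_le_lt in Hu1.
    exists 1; split; [lra|].
    assert ((1 - xa) * (Da * Db) <= (1 - xa) * Da ^ 2) by nra.
    assert ((t - xb) * c <= (1 - xb) * c) by nra.
    split; nra.
Qed.

Lemma dot_self_diff_identity d (a b : point) lam mu :
  dot d a a * dot d (fun i => lam * b i + (- mu) * a i) (fun i => lam * b i + (- mu) * a i)
  = lam ^ 2 * (dot d a a * dot d b b - (dot d a b) ^ 2)
    + (mu * dot d a a - lam * dot d a b) ^ 2.
Proof.
  rewrite dot_self_combination, (dot_comm d b a); ring.
Qed.

Lemma shadows_of_close_params d sigma a b p :
  0 < sigma ->
  0 < dot d (dir b) (dir b) <= dot d (dir a) (dir a) ->
  0 <= dot d (dir a) (dir b) ->
  (1 - sigma ^ 2 / 16) * (dot d (dir a) (dir a) * dot d (dir b) (dir b))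
    <= (dot d (dir a) (dir b)) ^ 2 ->
  seg_set a p -> seg_set b p ->
  - (sigma / 2) <= seg_param d p a - seg_param d p b <= sigma / 2 ->
  shadows d sigma a b.
Proof.
  intros Hs [HPb HPab] Hc Hcos Hpa Hpb Hx q [t [Ht Hq]].
  destruct (seg_param_spec d p a) as [Hxa Ea]; [lra | exact Hpa |].
  destruct (seg_param_spec d p b) as [Hxb Eb]; [exact HPb | exact Hpb |].
  pose proof (Cauchy_Schwarz d (dir a) (dir b) HPb) as HCS.
  pose proof (norm_mul_norm d (dir a)) as HNa.
  pose proof (norm_mul_norm d (dir b)) as HNb.
  pose proof (norm_nonneg d (dir a)); pose proof (norm_nonneg d (dir b)).
  set (Pa := dot d (dir a) (dir a)) in *; set (Pb := dot d (dir b) (dir b)) in *.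
  set (c := dot d (dir a) (dir b)) in *.
  set (xa := seg_param d p a) in *; set (xb := seg_param d p b) in *.
  set (Na := norm d (dir a)) in *; set (Nb := norm d (dir b)) in *.
  assert (HNa0 : 0 < Na) by nra.
  assert (HNb0 : 0 < Nb) by nra.
  assert (HNab : Nb <= Na) by nra.
  assert (HcN : c <= Na * Nb).
  { apply Rsqr_incr_0_var; [|nra].
    unfold Rsqr; rewrite <- HNa, <- HNb in HCS; nra. }
  destruct (exists_param_close sigma Na Nb c xa xb t) as [u [Hu Herr]];
    try split; try lra.
  exists (fun i => ep1 a i + u * dir a i); split.
  - exists u; split; [exact Hu|]; intros i; unfold dir, vsub; ring.
  - rewrite seg_diam_sqrt; change (sqrt (dot d (dir b) (dir b))) with Nb; unfold norm.
    rewrite (dot_ext d _ (fun i => (t - xb) * dir b i + (- (u - xa)) * dir a i) _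
                         (fun i => (t - xb) * dir b i + (- (u - xa)) * dir a i))
      by (intros i;
          assert (Hai : ep1 a i = ep1 b i + xb * dir b i - xa * dir a i)
            by (rewrite <- Eb, Ea; ring);
          unfold vsub at 1; rewrite Hq, Hai; unfold dir, vsub; ring).
    rewrite <- (sqrt_pow2 (sigma * Nb)) by nra; apply sqrt_le_1_alt.
    pose proof (dot_self_diff_identity d (dir a) (dir b) (t - xb) (u - xa)) as Hid.
    fold Pa Pb c in Hid.
    assert (Hgap : 0 <= Pa * Pb - c ^ 2 <= sigma ^ 2 / 16 * (Pa * Pb)) by lra.
    assert (Herr2 : ((u - xa) * Pa - (t - xb) * c) ^ 2 <= sigma ^ 2 / 4 * (Pa * Pb)).
    { replace Pa with (Na ^ 2) by (rewrite <- HNa; ring).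
      replace Pb with (Nb ^ 2) by (rewrite <- HNb; ring). nra. }
    assert (Ht2 : (t - xb) ^ 2 <= 1) by nra.
    assert (Pa * dot d (fun i => (t - xb) * dir b i + - (u - xa) * dir a i)
                       (fun i => (t - xb) * dir b i + - (u - xa) * dir a i)
            <= Pa * (sigma * Nb) ^ 2).
    { rewrite Hid. replace ((sigma * Nb) ^ 2) with (sigma ^ 2 * Pb) by (rewrite <- HNb; ring).
      nra. }
    apply Rmult_le_reg_l with Pa; lra.
Qed.

Lemma cos_sq_le_of_seg_angle d s s' theta :
  0 < dot d (dir s) (dir s) -> 0 < dot d (dir s') (dir s') ->
  0 < theta < PI / 2 -> seg_angle d s s' <= theta ->
  (cos theta) ^ 2 * (dot d (dir s) (dir s) * dot d (dir s') (dir s'))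
    <= (dot d (dir s) (dir s')) ^ 2.
Proof.
  intros Hs Hs' Hth Hang.
  unfold seg_angle in Hang.
  change (vsub (ep2 s) (ep1 s)) with (dir s) in Hang.
  change (vsub (ep2 s') (ep1 s')) with (dir s') in Hang.
  pose proof (Cauchy_Schwarz d (dir s) (dir s') Hs') as HCS.
  pose proof (norm_mul_norm d (dir s)) as HN; pose proof (norm_mul_norm d (dir s')) as HN'.
  pose proof (norm_nonneg d (dir s)); pose proof (norm_nonneg d (dir s')).
  set (c := dot d (dir s) (dir s')) in *.
  set (N := norm d (dir s)) in *; set (N' := norm d (dir s')) in *.
  assert (HNN : 0 < N * N') by (apply Rmult_lt_0_compat; nra).
  assert (Hc : Rabs c <= N * N').
  { apply Rsqr_incr_0_var; [|lra].
    unfold Rsqr; rewrite <- (pow2_abs c), <- HN, <- HN' in HCS; nra. }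
  set (y := Rabs c / (N * N')) in *.
  assert (Hy : 0 <= y <= 1).
  { pose proof (Rabs_pos c); unfold y; split.
    - apply Rmult_le_pos; [lra | left; apply Rinv_0_lt_compat; lra].
    - unfold Rdiv; rewrite <- (Rinv_r (N * N')) by lra.
      apply Rmult_le_compat_r; [left; apply Rinv_0_lt_compat|]; lra. }
  assert (Hcos : cos theta <= y).
  { rewrite <- (cos_acos y) by lra; pose proof (acos_bound y).
    apply cos_decr_1; lra. }
  assert (Hcth : 0 < cos theta) by (apply cos_gt_0; lra).
  assert (Hcc : cos theta * (N * N') <= Rabs c).
  { replace (Rabs c) with (y * (N * N')) 
      by (unfold y, Rdiv; rewrite Rmult_assoc, Rinv_l by lra; ring).
    nra. }
  rewrite <- HN, <- HN', <- (pow2_abs c).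
  replace (cos theta ^ 2 * (N * N * (N' * N'))) with ((cos theta * (N * N')) ^ 2) by ring.
  apply pow_incr; nra.
Qed.

Lemma dot_nonneg_of_near_common_dir d (a b z : point) k :
  1 / 2 < k -> 0 < dot d a a -> 0 < dot d b b -> 0 < dot d z z ->
  k * (norm d a * norm d z) <= dot d a z ->
  k * (norm d b * norm d z) <= dot d b z ->
  k * (norm d a * norm d b) <= Rabs (dot d a b) ->
  0 <= dot d a b.
Proof.
  intros Hk Ha Hb Hz Haz Hbz Hab.
  destruct (Rle_lt_dec 0 (dot d a b)) as [|Hneg]; [assumption | exfalso].
  rewrite Rabs_left in Hab by exact Hneg.
  pose proof (norm_mul_norm d a) as HNa; pose proof (norm_mul_norm d b) as HNb.
  pose proof (norm_mul_norm d z) as HNz.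
  pose proof (norm_nonneg d a); pose proof (norm_nonneg d b); pose proof (norm_nonneg d z).
  set (Na := norm d a) in *; set (Nb := norm d b) in *; set (Nz := norm d z) in *.
  assert (HNa0 : 0 < Na) by nra; assert (HNb0 : 0 < Nb) by nra; assert (HNz0 : 0 < Nz) by nra.
  assert (HNab : 0 < Na * Nb) by (apply Rmult_lt_0_compat; lra).
  assert (HNabz : 0 < Na * Nb * Nz) by (apply Rmult_lt_0_compat; lra).
  (* If [a.b < 0], then [Nb a + Na b] is short yet has a long component along [z]. *)
  pose proof (Cauchy_Schwarz d (fun i => Nb * a i + Na * b i) z Hz) as HC.
  rewrite dot_linear_l, dot_self_combination in HC.
  assert (Hsum : 2 * k * (Na * Nb * Nz) <= Nb * dot d a z + Na * dot d b z) by nra.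
  assert (Hself : Nb ^ 2 * dot d a a + 2 * Nb * Na * dot d a b + Na ^ 2 * dot d b b
                  <= 2 * (1 - k) * (Na * Nb) ^ 2).
  { rewrite <- HNa, <- HNb; nra. }
  assert (Hsq : (2 * k * (Na * Nb * Nz)) ^ 2 <= 2 * (1 - k) * (Na * Nb * Nz) ^ 2).
  { apply Rle_trans with ((Nb * dot d a z + Na * dot d b z) ^ 2); [apply pow_incr; nra|].
    replace (2 * (1 - k) * (Na * Nb * Nz) ^ 2) with (2 * (1 - k) * (Na * Nb) ^ 2 * dot d z z)
      by (rewrite <- HNz; ring).
    nra. }
  assert (Hgap : 0 < 4 * k ^ 2 - 2 * (1 - k)) by nra.
  assert (Hpos : 0 < (Na * Nb * Nz) ^ 2) by (apply pow_lt; lra).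
  pose proof (Rmult_lt_0_compat _ _ Hgap Hpos).
  nra.
Qed.

Lemma up_ge_1 r : 0 <= r -> (1 <= up r)%Z.
Proof.
  intros Hr; destruct (archimed r) as [H _].
  assert (0 < up r)%Z by (apply lt_0_IZR; lra); lia.
Qed.

Lemma up_le r r' : r <= r' -> (up r <= up r')%Z.
Proof.
  intros H; destruct (archimed r) as [H1 H2]; destruct (archimed r') as [H3 H4].
  assert (up r < up r' + 1)%Z by (apply lt_IZR; rewrite plus_IZR; simpl; lra); lia.
Qed.

Lemma INR_up_le r : 0 <= r -> INR (Z.to_nat (up r)) <= r + 1.
Proof.
  intros Hr; pose proof (up_ge_1 r Hr).
  rewrite INR_IZR_INZ, Z2Nat.id by lia.
  destruct (archimed r); lra.
Qed.

(* The points of [0,1] with the same bucket lie in one interval ((k-1) sigma/2, k sigma/2]. *)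
Definition bucket sigma x := Z.to_nat (up (2 * x / sigma)).

Lemma bucket_range sigma x :
  0 < sigma -> 0 <= x <= 1 -> (1 <= bucket sigma x <= Z.to_nat (up (2 / sigma)))%nat.
Proof.
  intros Hs Hx; unfold bucket.
  assert (H0 : 0 <= 2 * x / sigma) by (apply Rle_mult_inv_pos; lra).
  assert (H1 : 2 * x / sigma <= 2 / sigma)
    by (apply Rmult_le_compat_r; [left; apply Rinv_0_lt_compat |]; lra).
  pose proof (up_ge_1 _ H0); pose proof (up_le _ _ H1); lia.
Qed.

Lemma bucket_eq_close sigma x x' :
  0 < sigma -> 0 <= x -> 0 <= x' -> bucket sigma x = bucket sigma x' ->
  - (sigma / 2) <= x - x' <= sigma / 2.
Proof.
  intros Hs Hx Hx' E; unfold bucket in E.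
  set (r := 2 * x / sigma) in *; set (r' := 2 * x' / sigma) in *.
  assert (Hr : 0 <= r) by (apply Rle_mult_inv_pos; lra).
  assert (Hr' : 0 <= r') by (apply Rle_mult_inv_pos; lra).
  pose proof (up_ge_1 r Hr); pose proof (up_ge_1 r' Hr').
  assert (U : up r = up r') by lia.
  destruct (archimed r) as [H1 H2]; destruct (archimed r') as [H3 H4].
  rewrite U in H1, H2.
  assert (Ex : x - x' = (r - r') * (sigma / 2)) by (unfold r, r'; field; lra).
  rewrite Ex; split; nra.
Qed.

Lemma length_le_of_injective_nth {A : Type} (L : list A) (f : A -> nat) (N : nat) (x0 : A) :
  (forall x, In x L -> (1 <= f x <= N)%nat) ->
  (forall i j, (i < length L)%nat -> (j < length L)%nat ->
     f (nth i L x0) = f (nth j L x0) -> i = j) ->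
  (length L <= N)%nat.
Proof.
  intros Hrange Hinj.
  assert (Hnd : NoDup (map f L)).
  { apply (NoDup_nth (map f L) (f x0)); rewrite length_map; intros i j Hi Hj.
    rewrite !map_nth; apply Hinj; assumption. }
  assert (Hincl : incl (map f L) (seq 1 N)).
  { intros y Hy; apply in_map_iff in Hy; destruct Hy as [x [<- Hx]].
    apply in_seq; pose proof (Hrange x Hx); lia. }
  pose proof (NoDup_incl_length Hnd Hincl) as Hlen.
  now rewrite length_map, length_seq in Hlen.
Qed.

Section ConcurrentSegments.

Variables (d : nat) (sigma theta : R) (L : list segment) (p : point) (s0 : segment).

Hypothesis Hsigma : 0 < sigma <= 1.
Hypothesis Htheta : 0 < theta < PI / 2.
Hypothesis HL : seg_family d L.
Hypothesis Hexposed : exposed d sigma L.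
Hypothesis Hp : forall s, In s L -> seg_set s p.
Hypothesis Hangle : forall s s', In s L -> In s' L -> seg_angle d s s' <= theta.
Hypothesis Hsin : sin theta <= sigma / 4.
Hypothesis Hs0 : In s0 L.

Let oriented s := orient_along d (dir s0) s.

Lemma dir_dot_pos_in s : In s L -> 0 < dot d (dir s) (dir s).
Proof.
  intros Hs; destruct (proj1 HL s Hs) as [H1 [H2 Hne]]; exact (dir_dot_pos d s H1 H2 Hne).
Qed.

Lemma oriented_dir_dot_pos s : In s L -> 0 < dot d (dir (oriented s)) (dir (oriented s)).
Proof. intros Hs; unfold oriented; rewrite dot_self_orient_along; apply dir_dot_pos_in, Hs. Qed.

Lemma cos_theta_bounds : 1 / 2 < cos theta /\ 1 - sigma ^ 2 / 16 <= (cos theta) ^ 2.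
Proof.
  assert (Hs : 0 <= sin theta) by (apply sin_ge_0; lra).
  assert (Hc : 0 < cos theta) by (apply cos_gt_0; lra).
  pose proof (cos2 theta) as H; unfold Rsqr in H.
  split; nra.
Qed.

Lemma cos_sq_le_dot_oriented_sq s s' :
  In s L -> In s' L ->
  (cos theta) ^ 2 * (dot d (dir (oriented s)) (dir (oriented s))
                     * dot d (dir (oriented s')) (dir (oriented s')))
    <= (dot d (dir (oriented s)) (dir (oriented s'))) ^ 2.
Proof.
  intros Hs Hs'; unfold oriented.
  rewrite dot_orient_along_sq, (dot_comm d (dir s)), dot_orient_along_sq,
    (dot_comm d (dir s')), !dot_self_orient_along.
  apply cos_sq_le_of_seg_angle; auto using dir_dot_pos_in.
Qed.

Lemma oriented_dot_nonneg s s' :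
  In s L -> In s' L -> 0 <= dot d (dir (oriented s)) (dir (oriented s')).
Proof.
  intros Hs Hs'.
  destruct cos_theta_bounds as [Hk _].
  assert (Hcos : forall s s', In s L -> In s' L ->
            cos theta * (norm d (dir (oriented s)) * norm d (dir (oriented s')))
            <= Rabs (dot d (dir (oriented s)) (dir (oriented s')))).
  { intros t t' Ht Ht'; apply le_abs_dot_of_sq; [lra|].
    apply cos_sq_le_dot_oriented_sq; assumption. }
  assert (Hs0pos : forall s, 0 <= dot d (dir (oriented s)) (dir (oriented s0))).
  { intros t; unfold oriented; rewrite orient_along_dir; apply dot_orient_along_nonneg. }
  apply (dot_nonneg_of_near_common_dir d _ _ (dir (oriented s0)) (cos theta));
    auto using oriented_dir_dot_pos.
  - rewrite <- (Rabs_pos_eq _ (Hs0pos s)); auto.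
  - rewrite <- (Rabs_pos_eq _ (Hs0pos s')); auto.
Qed.

Lemma seg_param_oriented_spec s :
  In s L -> 0 <= seg_param d p (oriented s) <= 1.
Proof.
  intros Hs; apply (seg_param_spec d p (oriented s)); [apply oriented_dir_dot_pos, Hs|].
  apply same_seg_orient_along, Hp, Hs.
Qed.

Lemma shadows_of_same_bucket s s' :
  In s L -> In s' L ->
  dot d (dir s') (dir s') <= dot d (dir s) (dir s) ->
  bucket sigma (seg_param d p (oriented s)) = bucket sigma (seg_param d p (oriented s')) ->
  shadows d sigma s s'.
Proof.
  intros Hs Hs' Hle Hbucket.
  apply (shadows_same_seg d sigma (oriented s) (oriented s'));
    [apply same_seg_orient_along | apply same_seg_orient_along | apply seg_diam_orient_along |].
  destruct cos_theta_bounds as [_ Hcos].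
  pose proof (cos_sq_le_dot_oriented_sq s s' Hs Hs') as Hangle_ss'.
  pose proof (oriented_dir_dot_pos s Hs); pose proof (oriented_dir_dot_pos s' Hs').
  apply (shadows_of_close_params d sigma _ _ p).
  - lra.
  - unfold oriented; rewrite !dot_self_orient_along; split; [apply dir_dot_pos_in, Hs' | exact Hle].
  - apply oriented_dot_nonneg; assumption.
  - apply Rle_trans with (2 := Hangle_ss'), Rmult_le_compat_r; [nra | exact Hcos].
  - apply same_seg_orient_along, Hp, Hs.
  - apply same_seg_orient_along, Hp, Hs'.
  - apply bucket_eq_close; [lra | apply seg_param_oriented_spec; assumption
                                | apply seg_param_oriented_spec; assumption | exact Hbucket].
Qed.

Lemma length_le_number_of_buckets : (length L <= Z.to_nat (up (2 / sigma)))%nat.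
Proof.
  set (dflt := Seg (fun _ => 0) (fun _ => 0)).
  apply (length_le_of_injective_nth L (fun s => bucket sigma (seg_param d p (oriented s))) _ dflt).
  - intros s Hs; apply bucket_range; [lra | apply seg_param_oriented_spec, Hs].
  - intros i j Hi Hj Hbucket.
    destruct (Nat.eq_dec i j) as [|Hij]; [assumption | exfalso].
    pose proof (proj2 HL i j Hi Hj Hij) as Hdistinct; fold dflt in Hdistinct.
    pose proof (nth_In L dflt Hi) as Hs; pose proof (nth_In L dflt Hj) as Hs'.
    set (s := nth i L dflt) in *; set (s' := nth j L dflt) in *.
    destruct (Rle_lt_dec (dot d (dir s') (dir s')) (dot d (dir s) (dir s))) as [Hle|Hlt].
    + exact (Hexposed s s' Hs Hs' Hdistinct (shadows_of_same_bucket s s' Hs Hs' Hle Hbucket)).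
    + apply (Hexposed s' s Hs' Hs).
      * intros Hsame; apply Hdistinct; intros q; symmetry; apply Hsame.
      * apply shadows_of_same_bucket; auto; lra.
Qed.

End ConcurrentSegments.

Theorem mainTheorem5 :
  exists C : R, forall (d : nat) (sigma theta : R) (L : list segment),
    (1 <= d)%nat ->
    0 < sigma <= 1 ->
    0 < theta < PI / 2 ->
    seg_family d L ->
    exposed d sigma L ->
    (exists p : point, forall s, In s L -> seg_set s p) ->
    (forall s s', In s L -> In s' L -> seg_angle d s s' <= theta) ->
    sin theta <= sigma / 4 ->
    INR (length L) <= C / sigma ^ 2.
Proof.
  exists 3; intros d sigma theta L _ Hsigma Htheta HL Hexposed [p Hp] Hangle Hsin.
  assert (Hsigma2 : 0 < sigma ^ 2) by nra.
  assert (Hbound : 2 / sigma + 1 <= 3 / sigma ^ 2).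
  { replace (2 / sigma + 1) with ((2 * sigma + sigma ^ 2) / sigma ^ 2) by (field; lra).
    apply Rmult_le_compat_r; [left; apply Rinv_0_lt_compat |]; nra. }
  assert (Hpos : 0 <= 2 / sigma) by (apply Rle_mult_inv_pos; lra).
  apply Rle_trans with (2 := Hbound).
  destruct L as [|s0 L'].
  - simpl; lra.
  - apply Rle_trans with (2 := INR_up_le _ Hpos), le_INR.
    apply (length_le_number_of_buckets d sigma theta (s0 :: L') p s0); auto.
    now left.
Qed.
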